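(* Let $\mathcal{T}=(V,A,E,f,q,v_0)$ be a decorated rooted tree that has negative determinants and satisfies $f(A)\subseteq\mathbb{N}=\{0,1,2,\dots\}$. Let $v,v'\in V$ with $v<v'$ and suppose the path $\gamma=\gamma_{v,v'}=(x_0,\dots,x_n)$ is linear; let $q=q(\{x_0,x_1\},v)$ and $Q'=Q(\{x_{n-1},x_n\},v')$. (a) $q>0$, $Q'>0$, and $q\,N_{v'}-Q'\,N_v\le0$. (b) If there exists $\alpha\in A\setminus A_0$ with $\alpha>v'$, then $q\,N_{v'}-Q'\,N_v<0$.
   Context: A graph is a pair $(X_0,X_1)$ of finite sets such that each element of $X_1$ (an edge) is a $2$-element subset of $X_0$; elements of $X_0$ are cells. The valency $\delta_x$ of a cell is the number of edges containing it. A path is a tuple $(x_0,\dots,x_n)$ ($n\ge0$) of cells with $\{x_i,x_{i+1}\}$ an edge for each $i<n$, these edges pairwise distinct; a cell/edge is in the path if it is some $x_i$ / some $\{x_i,x_{i+1}\}$. The graph is a tree if any two cells $x,y$ are joined by a unique path $\gamma_{x,y}$. A decorated tree is $(V,A,E,f,q)$ with $V$ (vertices), $A$ (arrows) finite disjoint sets, $(V\cup A,E)$ a tree, every arrow of valency $1$, $f:A\to\mathbb{Z}$, $q(e,x)\in\mathbb{Z}$ for each $e\in E$, $x\in e$, with $q(e,\alpha)=1$ for $\alpha\in A$, and for each $v\in V$ and distinct edges $e,e'\ni v$, $\gcd(q(e,v),q(e',v))=1$. $A_0=\{\alpha\in A:f(\alpha)=0\}$. For $x\in V\cup A$, $e\ni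 x$: $Q(e,x)=\prod q(e',x)$ over edges $e'\ne e$ containing $x$ (empty product $=1$); $\det(\{x,y\})=q(e,x)q(e,y)-Q(e,x)Q(e,y)$ for $e=\{x,y\}$. An edge $\varepsilon$ is incident to a path $\gamma$ if it is not in $\gamma$ but contains a cell $u$ of $\gamma$; $q(\varepsilon,\gamma):=q(\varepsilon,u)$. For $v\ne\alpha$, $v\in V\cup A$, $\alpha\in A$: $x_{v,\alpha}=f(\alpha)\prod_\varepsilon q(\varepsilon,\gamma_{v,\alpha})$ over edges incident to $\gamma_{v,\alpha}$. For $v\in V\cup A_0$, $N_v=\sum_{\alpha\in A\setminus A_0}x_{v,\alpha}$. A path $(x_0,\dots,x_n)$, $n>0$, is linear if $\delta_{x_i}=2$ for all $0<i<n$. A root of $(V,A,E,f,q)$ is a vertex $v_0$ with $q(e,v_0)=1$ for every edge $e\ni v_0$ such that for every $v\in V\setminus\{v_0\}$, all edges $e\ni v$ not in $\gamma_{v_0,v}$ satisfy $q(e,v)\ge1$ and at most one of them satisfies $q(e,v)\ne1$. A decorated rooted tree is $(V,A,E,f,q,v_0)$ with $v_0$ a root. For distinct $x,y\in V\cup A$, $x<y$ means $x$ is in $\gamma_{v_0,y}$. $\mathcal{T}$ has negative determinants if $\det(e)<0$ for every edge $e=\{x,y\}$ with $x,y\in V$. *)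

From Stdlib Require Import ClassicalEpsilon.
From mathcomp Require Import all_boot all_order all_algebra.
Set Implicit Arguments. Unset Strict Implicit. Unset Printing Implicit Defensive.
Import Order.TTheory GRing.Theory Num.Theory.
Local Open Scope ring_scope.

(* Cells are the elements of a finite type T (= V ∪ A); edges are 2-element
   subsets of T. *)

Definition edges_of (T : finType) (p : seq T) : seq {set T} :=
  [seq [set xy.1; xy.2] | xy <- zip p (behead p)].

Definition is_path (T : finType) (E : {set {set T}}) (x y : T) (p : seq T) : bool :=
  [&& p != [::], head x p == x, last x p == y,
      all (fun e => e \in E) (edges_of p) & uniq (edges_of p)].

Definition is_tree (T : finType) (E : {set {set T}}) : Prop :=
  forall x y : T, exists! p : seq T, is_path E x y p.

Definition gamma (T : finType) (E : {set {set T}}) (x y : T) : seq T :=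
  epsilon (inhabits [:: x]) (fun p => is_path E x y p).

Definition valency (T : finType) (E : {set {set T}}) (x : T) : nat :=
  #|[set e in E | x \in e]|.

Definition Qf (T : finType) (E : {set {set T}}) (q : {set T} -> T -> int)
  (e : {set T}) (x : T) : int :=
  \prod_(e' in E | (x \in e') && (e' != e)) q e' x.

Definition detE (T : finType) (E : {set {set T}}) (q : {set T} -> T -> int)
  (x y : T) : int :=
  q [set x; y] x * q [set x; y] y - Qf E q [set x; y] x * Qf E q [set x; y] y.

Definition xva (T : finType) (E : {set {set T}}) (f : T -> int)
  (q : {set T} -> T -> int) (v a : T) : int :=
  let g := gamma E v a in
  f a * \prod_(eps in E | (eps \notin edges_of g) && has (fun u => u \in eps) g)
          q eps (nth v g (find (fun u => u \in eps) g)).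

(* N_v = sum over alpha in A \ A_0 of x_{v,alpha} *)
Definition Nv (T : finType) (A : {set T}) (E : {set {set T}}) (f : T -> int)
  (q : {set T} -> T -> int) (v : T) : int :=
  \sum_(a in A | f a != 0) xva E f q v a.

Definition linear_path (T : finType) (E : {set {set T}}) (p : seq T) : bool :=
  match p with
  | [::] => false
  | x :: _ => (1 < size p)%N &&
              all (fun i => valency E (nth x p i) == 2%N) (iota 1 (size p - 2))
  end.

Definition decorated_tree (T : finType) (V A : {set T}) (E : {set {set T}})
  (f : T -> int) (q : {set T} -> T -> int) : Prop :=
  [disjoint V & A] /\ V :|: A = [set: T] /\
  (forall e, e \in E -> #|e| = 2%N) /\
  is_tree E /\
  (forall a, a \in A -> valency E a = 1%N) /\
  (forall e a, e \in E -> a \in A -> a \in e -> q e a = 1) /\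
  (forall v e e', v \in V -> e \in E -> e' \in E -> v \in e -> v \in e' ->
     e != e' -> gcdz (q e v) (q e' v) = 1).

Definition is_root (T : finType) (V : {set T}) (E : {set {set T}})
  (q : {set T} -> T -> int) (v0 : T) : Prop :=
  [/\ v0 \in V,
      (forall e, e \in E -> v0 \in e -> q e v0 = 1) &
      (forall v, v \in V -> v != v0 ->
         (forall e, e \in E -> v \in e -> e \notin edges_of (gamma E v0 v) -> 1 <= q e v)
         /\ (#|[set e in E | [&& v \in e, e \notin edges_of (gamma E v0 v) & q e v != 1]]|
               <= 1)%N)].

Definition tree_lt (T : finType) (E : {set {set T}}) (v0 x y : T) : bool :=
  (x != y) && (x \in gamma E v0 y).

Definition negative_dets (T : finType) (V : {set T}) (E : {set {set T}})
  (q : {set T} -> T -> int) : Prop :=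
  forall x y, x \in V -> y \in V -> [set x; y] \in E -> detE E q x y < 0.

(* Write gamma_{v,v'} = (x_0, ..., x_n).  Its interior cells have valency 2, so at
   such a cell Q for one path edge is q for the other, and the negative determinants
   of the path edges chain together into
     q(x_0x_1, v) * q(x_{n-1}x_n, v') < Q(x_0x_1, v) * Q(x_{n-1}x_n, v').
   The root condition gives q(e, u) >= 1 for every vertex u and every edge e at u not
   on gamma_{v_0,u}; hence q > 0, Q' > 0, and all products of incident decorations
   met below are positive.
   The path from an arrow alpha first meets gamma_{v,v'} at one of its ends.  If
   gamma_{v,alpha} runs through v', then x_{v,alpha} = f(alpha) Q(x_0x_1, v) K and
   x_{v',alpha} = f(alpha) q(x_{n-1}x_n, v') K with the same K > 0, so the term
   q x_{v',alpha} - Q' x_{v,alpha} is negative.  Otherwise gamma_{v',alpha} runs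
   through v, the same computation makes that term 0, and alpha is not beyond v'. *)

From Stdlib Require Import ClassicalEpsilon.
From mathcomp Require Import all_boot all_order all_algebra.
From mathcomp Require Import zify ring lra.
Import Order.TTheory GRing.Theory Num.Theory.
Local Open Scope ring_scope.
Set Implicit Arguments. Unset Strict Implicit. Unset Printing Implicit Defensive.

Lemma cross_lt_trans (R : realDomainType) (a0 A0 a b b' c : R) :
  0 < a0 -> 0 < a -> 0 < c -> a0 * b < A0 * a -> a * b' < b * c -> a0 * b' < A0 * c.
Proof. by move=> *; nra. Qed.

Lemma head_rev (T : Type) (x : T) s : head x (rev s) = last x s.
Proof. by case/lastP: s => [|s y] //; rewrite rev_rcons last_rcons. Qed.

Lemma last_rev (T : Type) (x : T) s : last x (rev s) = head x s.
Proof. by case: s => [|y s] //; rewrite rev_cons last_rcons. Qed.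

Lemma nth1_cons_rcons (T : Type) (x y : T) s : nth x (x :: rcons s y) 1 = head y s.
Proof. by case: s. Qed.

Lemma nth_size_cons_rcons (T : Type) (x y : T) s : nth x (x :: rcons s y) (size s) = last x s.
Proof. by rewrite -rcons_cons nth_rcons /= ltnS leqnn; apply: (nth_last x (x :: s)). Qed.

Lemma nth_last_cons_rcons (T : Type) (x y : T) s : nth x (x :: rcons s y) (size s).+1 = y.
Proof. by rewrite /= nth_rcons ltnn eqxx. Qed.

Lemma mem_split (T : eqType) (s : seq T) x : x \in s -> exists s1 s2, s = s1 ++ x :: s2.
Proof. by case/splitPr=> s1 s2; exists s1, s2. Qed.

Lemma has_split_last (T : Type) (P : pred T) s : has P s ->
  exists s1 c s2, [/\ s = s1 ++ c :: s2, P c & ~~ has P s2].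
Proof.
elim/last_ind: s => [//|s z IH]; rewrite has_rcons.
case: (boolP (P z)) => [Pz _|PNz /= /IH[s1 [c [s2 [-> Pc PNs2]]]]].
  by exists s, z, [::]; rewrite cats1.
by exists s1, c, (rcons s2 z); rewrite rcons_cat has_rcons negb_or PNz.
Qed.

Section Paths.
Variables (T : finType) (E : {set {set T}}).

Definition adj (a b : T) : bool := [set a; b] \in E.

Lemma adj_sym : symmetric adj.
Proof. by move=> a b; rewrite /adj setUC. Qed.

Lemma edges_of_cons2 (x y : T) s : edges_of (x :: y :: s) = [set x; y] :: edges_of (y :: s).
Proof. by []. Qed.

Lemma edges_of_catr s1 s2 : {subset edges_of s2 <= edges_of (s1 ++ s2 : seq T)}.
Proof.
elim: s1 => //= z s1 IH e /IH; case: (s1 ++ s2) => // y t.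
by rewrite edges_of_cons2 in_cons => ->; rewrite orbT.
Qed.

Lemma edges_of_cells eps (s : seq T) z : eps \in edges_of s -> z \in eps -> z \in s.
Proof.
elim: s => [|x s IH] //; case: s IH => [|y s] IH //.
rewrite edges_of_cons2 in_cons => /orP[/eqP->|/IH H /H zys]; last by rewrite in_cons zys orbT.
by rewrite !inE => /orP[]/eqP->; rewrite eqxx ?orbT.
Qed.

Lemma all_edges_ofE (x : T) s : all (fun e => e \in E) (edges_of (x :: s)) = path adj x s.
Proof. by elim: s x => [|y s IH] x //=; rewrite -IH. Qed.

Lemma uniq_edges_of (x : T) s : uniq (x :: s) -> uniq (edges_of (x :: s)).
Proof.
elim: s x => [|y s IH] x //= /andP[xNs /IH ->]; rewrite andbT.
by apply: contra xNs => /edges_of_cells; apply; rewrite set21.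
Qed.

Lemma edges_of_cat (x y : T) s t :
  edges_of (x :: s ++ y :: t) = edges_of (x :: s) ++ [set last x s; y] :: edges_of (y :: t).
Proof. by elim: s x => [|z s IH] x //=; rewrite -IH. Qed.

Lemma edges_of_rcons (x y : T) s :
  edges_of (x :: rcons s y) = rcons (edges_of (x :: s)) [set last x s; y].
Proof. by rewrite -cats1 edges_of_cat cats1. Qed.

Lemma edges_of_head (x y : T) s eps : uniq (x :: y :: s) ->
  eps \in edges_of (x :: y :: s) -> x \in eps -> eps = [set x; y].
Proof.
rewrite edges_of_cons2 in_cons => /andP[xNys _] /orP[/eqP//|/edges_of_cells H /H].
by rewrite (negbTE xNys).
Qed.

Lemma edges_of_last (d y : T) p eps : uniq (rcons p y) ->
  eps \in edges_of (rcons p y) -> y \in eps -> eps = [set last d p; y].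
Proof.
case: p => [//|x s]; rewrite rcons_cons -cats1 -cat_cons cat_uniq edges_of_cat /= orbF andbT.
move=> /andP[_ yNxs].
rewrite mem_cat in_cons in_nil orbF => /orP[/edges_of_cells H /H|/eqP//].
by rewrite (negbTE yNxs).
Qed.

Lemma valency2_edges c e1 e2 eps : valency E c = 2%N -> e1 \in E -> e2 \in E ->
  eps \in E -> c \in e1 -> c \in e2 -> c \in eps -> e1 != e2 -> (eps == e1) || (eps == e2).
Proof.
move=> c2 e1E e2E epsE ce1 ce2 ceps e12; apply/negPn/negP; rewrite negb_or => /andP[n1 n2].
suff : (size [:: e1; e2; eps] <= #|[set e in E | c \in e]|)%N by rewrite -/(valency E c) c2.
rewrite cardE; apply: uniq_leq_size => [|z].
  by rewrite /= !inE !negb_or e12 !(eq_sym _ eps) n1 n2.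
by rewrite mem_enum !inE => /or3P[]/eqP->; apply/andP.
Qed.

Lemma valency1_edge c e1 e2 : valency E c = 1%N -> e1 \in E -> e2 \in E ->
  c \in e1 -> c \in e2 -> e1 = e2.
Proof.
move=> c1 e1E e2E ce1 ce2; apply/eqP/negPn/negP => e12.
suff : (size [:: e1; e2] <= #|[set e in E | c \in e]|)%N by rewrite -/(valency E c) c1.
rewrite cardE; apply: uniq_leq_size => [|z]; first by rewrite /= !inE e12.
by rewrite mem_enum !inE => /orP[]/eqP->; apply/andP.
Qed.

Lemma valency2_path_edges x s y c eps : path adj x (rcons s y) -> uniq (x :: rcons s y) ->
  c \in s -> valency E c = 2%N -> eps \in E -> c \in eps -> eps \in edges_of (x :: rcons s y).
Proof.
move=> + + c_in c2 epsE ceps; case/splitPr: c_in => s1 s2 xsy_path xsy_uniq.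
have split_c : x :: rcons (s1 ++ c :: s2) y = x :: s1 ++ c :: rcons s2 y by rewrite rcons_cat.
have edges_c : edges_of (x :: rcons (s1 ++ c :: s2) y) =
    edges_of (x :: s1) ++ [set last x s1; c] :: [set c; head y s2] ::
      edges_of (head y s2 :: behead (rcons s2 y)).
  by rewrite split_c edges_of_cat; case: (s2).
have inE_of e : e \in edges_of (x :: rcons (s1 ++ c :: s2) y) -> e \in E.
  by move: xsy_path; rewrite -all_edges_ofE => /allP; apply.
have e1_in : [set last x s1; c] \in edges_of (x :: rcons (s1 ++ c :: s2) y).
  by rewrite edges_c mem_cat mem_head orbT.
have e2_in : [set c; head y s2] \in edges_of (x :: rcons (s1 ++ c :: s2) y).
  by rewrite edges_c mem_cat !in_cons eqxx !orbT.
have e12 : [set last x s1; c] != [set c; head y s2].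
  move: xsy_uniq; rewrite split_c -cat_cons cat_uniq => /and3P[_ /hasP disj _].
  apply/eqP => e12; apply: disj; exists (last x s1); last exact: mem_last.
  have : last x s1 \in [set c; head y s2] by rewrite -e12 set21.
  rewrite !inE => /orP[]/eqP->; first exact: mem_head.
  by case: (s2) => [|z s2'] /=; rewrite !inE eqxx orbT.
have := valency2_edges c2 (inE_of _ e1_in) (inE_of _ e2_in) epsE (set22 _ _) (set21 _ _) ceps e12.
by case/orP=> /eqP->.
Qed.

Definition upath (x : T) s y := [&& path adj x s, last x s == y & uniq (x :: s)].

Lemma upath_is_path x s y : upath x s y -> is_path E x y (x :: s).
Proof.
case/and3P=> xs_path xs_last xs_uniq.
by apply/and5P; split; rewrite ?all_edges_ofE ?uniq_edges_of.
Qed.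

Lemma upath_edges x s y e : upath x s y -> e \in edges_of (x :: s) -> e \in E.
Proof. by case/and3P; rewrite -all_edges_ofE => /allP xs_edges _ _ /xs_edges. Qed.

Lemma upath_cat x s1 c s2 y : upath x s1 c -> upath c s2 y ->
  ~~ has (mem (x :: s1)) s2 -> upath x (s1 ++ s2) y.
Proof.
case/and3P=> p1 /eqP l1 u1 /and3P[p2 l2 /andP[_ u2]] disj.
by rewrite /upath cat_path last_cat l1 p1 p2 l2 -cat_cons cat_uniq u1 disj.
Qed.

Lemma upath_split x s y s1 c s2 : upath x s y -> x :: s = s1 ++ c :: s2 ->
  (exists w, x :: w = rcons s1 c /\ upath x w c) /\ upath c s2 y.
Proof.
move=> /and3P[xs_path /eqP xs_last xs_uniq] xs_eq.
move: xs_uniq; rewrite xs_eq -cat_rcons cat_uniq => /and3P[u1 disj u2].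
case def_w: (rcons s1 c) => [|x' w]; first by case: (s1) def_w.
move: xs_eq; rewrite -cat_rcons def_w => -[x'x s_eq]; subst x'.
move: xs_path xs_last; rewrite s_eq cat_path => /andP[p1 p2] xs_last.
have wc : last x w = c by rewrite -[last x w]/(last x (x :: w)) -def_w last_rcons.
have c_in : c \in rcons s1 c by rewrite mem_rcons mem_head.
split; first by exists w; rewrite /upath p1 wc eqxx -def_w u1.
rewrite /upath -wc p2 -xs_last last_cat eqxx /= u2 andbT wc.
by apply: contra disj => cs2; apply/hasP; exists c.
Qed.

Lemma upath_rev x s y : upath x s y -> exists s', y :: s' = rev (x :: s) /\ upath y s' x.
Proof.
case/and3P=> xs_path /eqP xs_last xs_uniq; exists (rev (belast x s)).
have rev_eq : y :: rev (belast x s) = rev (x :: s) by rewrite -rev_rcons -xs_last -lastI.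
split=> //; rewrite /upath -xs_last rev_path.
rewrite (eq_path (e' := adj)) ?xs_path; last by move=> a b; rewrite /= adj_sym.
by rewrite xs_last rev_eq rev_uniq xs_uniq andbT -(last_cons x) rev_eq rev_cons last_rcons /=.
Qed.

End Paths.

Section Tree.
Variables (T : finType) (E : {set {set T}}).
Hypothesis E2 : forall e, e \in E -> #|e| = 2%N.
Hypothesis tree : is_tree E.

Local Notation upath := (upath E).

Lemma is_path_unique x y p p' : is_path E x y p -> is_path E x y p' -> p = p'.
Proof.
move=> p_path p'_path; case: (tree x y) => p0 [_ p0_uniq].
by rewrite -(p0_uniq _ p_path) -(p0_uniq _ p'_path).
Qed.

Lemma upath_unique x s s' y : upath x s y -> upath x s' y -> s = s'.
Proof. by move=> /upath_is_path p /upath_is_path p'; case: (is_path_unique p p'). Qed.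

Lemma gamma_upath x y : exists2 s, gamma E x y = x :: s & upath x s y.
Proof.
have : is_path E x y (gamma E x y).
  apply: (epsilon_spec (inhabits [:: x]) (fun p => is_path E x y p)).
  by case: (tree x y) => p [p_path _]; exists p.
case: (gamma E x y) => [/and5P[]//|x' s] g_path; move: (g_path) => /and5P[_ /= /eqP x'x g_last].
subst x'; rewrite all_edges_ofE => s_path _.
case/shortenP: s_path g_last => s' s'_path s'_uniq _ /eqP s'_last.
have s'_upath : upath x s' y by rewrite /upath s'_path s'_last eqxx s'_uniq.
by exists s' => //; apply: is_path_unique g_path (upath_is_path s'_upath).
Qed.

Lemma gammaE x s y : upath x s y -> gamma E x y = x :: s.
Proof. by move=> xsy; case: (gamma_upath x y) => s' -> /(upath_unique xsy) ->. Qed.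

Lemma no_chord x s y eps a b : upath x s y -> eps \in E -> eps \notin edges_of (x :: s) ->
  a \in x :: s -> b \in x :: s -> a \in eps -> b \in eps -> a = b.
Proof.
move=> xsy epsE epsN a_in b_in a_eps b_eps; apply/eqP/negPn/negP => ab.
have eps_ab : eps = [set a; b].
  apply/eqP; rewrite eq_sym eqEcard (E2 epsE) cards2 ab andbT.
  by apply/subsetP => z; rewrite !inE => /orP[]/eqP->.
wlog [s1 [s2 [xs_eq b_in2]]] : a b a_in b_in a_eps b_eps ab eps_ab /
    exists s1 s2, x :: s = s1 ++ a :: s2 /\ b \in s2.
  move=> W; have [s1 [s2 xs_eq]] := mem_split a_in.
  move: (b_in); rewrite xs_eq mem_cat in_cons eq_sym (negbTE ab) /= => /orP[b_in1|b_in2].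
    have [t1 [t2 s1_eq]] := mem_split b_in1.
    apply: (W b a) => //; [by rewrite eq_sym | by rewrite eps_ab setUC |].
    by exists t1, (t2 ++ a :: s2); rewrite xs_eq s1_eq -catA mem_cat mem_head orbT.
  by apply: (W a b) => //; exists s1, s2.
case/splitPr: b_in2 xs_eq => m s3 xs_eq.
have [_ a_path] := upath_split xsy xs_eq.
have [[w [w_eq w_path]] _] := upath_split a_path (erefl : _ = (a :: m) ++ b :: s3).
have ab_path : upath a [:: b] b by rewrite /upath /= /adj -eps_ab epsE eqxx inE ab.
have m_nil : m = [::].
  by move: w_eq; rewrite (upath_unique w_path ab_path) rcons_cons; case: (m) => [|? []].
have ab_edge : [set a; b] \in edges_of (a :: b :: s3) by rewrite edges_of_cons2 mem_head.
by move: epsN; rewrite xs_eq m_nil eps_ab (edges_of_catr _ ab_edge).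
Qed.


Lemma gamma_branch x s y t z : upath x s y -> upath y t z -> exists s1 c s2 t2,
  [/\ x :: s = s1 ++ c :: s2, y :: t = rev s2 ++ c :: t2,
      ~~ has (mem (x :: s)) t2 & gamma E x z = s1 ++ c :: t2].
Proof.
move=> xsy ytz.
have meets : has (mem (x :: s)) (y :: t).
  by apply/hasP; exists y; rewrite ?mem_head //; case/and3P: xsy => _ /eqP <- _; apply: mem_last.
have [u1 [c [t2 [yt_eq c_in t2N]]]] := has_split_last meets.
have [s1 [s2 xs_eq]] := mem_split c_in.
have [[w [w_eq ywc]] ct2z] := upath_split ytz yt_eq.
have [[w1 [w1_eq xw1c]] cs2y] := upath_split xsy xs_eq.
have [w' [w'_eq cw'y]] := upath_rev ywc.
move: w'_eq; rewrite w_eq rev_rcons => -[w'_eq].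
have s2_eq := upath_unique cw'y cs2y.
exists s1, c, s2, t2; split => //; first by rewrite yt_eq -s2_eq w'_eq revK.
have w1N : ~~ has (mem (x :: w1)) t2.
  apply: contra t2N => /hasP[z' z'_t2].
  rewrite -[mem _ z']/(z' \in x :: w1) w1_eq mem_rcons => z'_s1.
  have z'_in : z' \in x :: s by rewrite xs_eq -cat_rcons mem_cat mem_rcons z'_s1.
  by apply/hasP; exists z'.
by rewrite (gammaE (upath_cat xw1c ct2z w1N)) -cat_cons w1_eq cat_rcons.
Qed.

Lemma gamma_uniq x y : uniq (gamma E x y).
Proof. by have [s -> /and3P[]] := gamma_upath x y. Qed.

Lemma gamma_edges x y e : e \in edges_of (gamma E x y) -> e \in E.
Proof. by have [s -> /upath_edges] := gamma_upath x y; apply. Qed.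

Lemma gamma_cat x y z p t : gamma E x y = rcons p y -> gamma E y z = y :: t ->
  last x p \notin t -> gamma E x z = rcons p y ++ t.
Proof.
move=> gxy gyz predN; have [s gxy' xsy] := gamma_upath x y.
have [t' gyz' ytz] := gamma_upath y z; move: gyz'; rewrite gyz => -[t_eq]; subst t'.
case: p gxy predN => [|x' p] gxy predN.
  by move: gxy'; rewrite gxy => -[y_x _]; rewrite -y_x gyz.
move: gxy'; rewrite gxy rcons_cons => -[x'_eq s_eq]; subst x' s.
have [s1 [c [s2 [t2 [xs_eq yt_eq _ ->]]]]] := gamma_branch xsy ytz.
case/lastP: s2 xs_eq yt_eq => [|s2 y'] xs_eq yt_eq.
  move: xs_eq; rewrite cats1 -rcons_cons => /rcons_inj[s1_eq c_eq]; subst s1 c.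
  by move: yt_eq => /= -[<-]; rewrite cat_rcons.
move: xs_eq; rewrite -!rcons_cons -rcons_cat => /rcons_inj[xs_eq _].
move: yt_eq; rewrite rev_rcons => -[_ t_eq].
have last_eq : last x p = last c s2 by rewrite -[last x p]/(last x (x :: p)) xs_eq last_cat.
move: predN; rewrite /= last_eq t_eq mem_cat in_cons mem_rev.
by have := mem_last c s2; rewrite in_cons => /orP[]->; rewrite ?orbT.
Qed.

Lemma gamma_linear v0 v v' : tree_lt E v0 v v' -> linear_path E (gamma E v v') ->
  exists hm r1, [/\ gamma E v v' = v :: rcons hm v', {in hm, forall c, valency E c = 2%N}
                  & gamma E v0 v' = r1 ++ gamma E v v'].
Proof.
case/andP=> vv' v_in; have [s gvv' vsv'] := gamma_upath v v'.
case/lastP: s gvv' vsv' => [|hm y] gvv' vsv'.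
  by case/and3P: vsv' => _ /eqP /= vv; rewrite vv eqxx in vv'.
have y_v' : y = v' by case/and3P: vsv' => _ /eqP; rewrite last_rcons.
subst y; rewrite gvv' => /andP[_ /allP lin]; exists hm.
have [r1 [r2 g0_eq]] := mem_split v_in; have [s0 g0 v0s0] := gamma_upath v0 v'.
have [_ vr2] := upath_split v0s0 (etrans (esym g0) g0_eq).
exists r1; split => //; last by rewrite g0_eq (upath_unique vr2 vsv').
move=> c c_hm; have i_in : (index c hm).+1 \in iota 1 (size (v :: rcons hm v') - 2).
  by rewrite mem_iota /= size_rcons add1n subn2 /= ltnS index_mem.
by have := lin _ i_in; rewrite /= nth_rcons index_mem c_hm nth_index // => /eqP.
Qed.

Lemma gamma_linear_cases v hm v' z : upath v (rcons hm v') v' ->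
  {in hm, forall c, valency E c = 2%N} -> z \notin hm ->
  (exists2 t, gamma E v' z = v' :: t & gamma E v z = v :: hm ++ v' :: t) \/
  (exists2 t, gamma E v' z = v' :: rev hm ++ v :: t & gamma E v z = v :: t).
Proof.
move=> vhv hm2 zN; have [pa gv'z v'paz] := gamma_upath v' z.
have [s1 [c [s2 [t2 [vh_eq pa_eq disj ->]]]]] := gamma_branch vhv v'paz.
case/lastP: s2 vh_eq pa_eq => [|s2 y] vh_eq pa_eq.
  move: vh_eq; rewrite cats1 -rcons_cons => /rcons_inj[s1_eq c_eq]; subst s1 c.
  by left; exists pa; move: pa_eq => //= -[->].
move: vh_eq; rewrite -!rcons_cons -rcons_cat => /rcons_inj[vh_eq y_eq]; subst y.
move: pa_eq; rewrite rev_rcons => -[pa_eq].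
case: s1 vh_eq => [|w s1] /= [v_eq hm_eq].
  by subst c; right; exists t2; rewrite // gv'z pa_eq hm_eq.
have c_hm : c \in hm by rewrite hm_eq mem_cat mem_head orbT.
exfalso; case: t2 pa_eq disj => [|w' t2] pa_eq disj.
  have : last v' pa = z by case/and3P: v'paz => _ /eqP.
  by rewrite pa_eq cats1 last_rcons => c_z; rewrite -c_z c_hm in zN.
have cw'_edge : [set c; w'] \in edges_of (v' :: pa).
  by rewrite pa_eq -cat_cons edges_of_catr // edges_of_cons2 mem_head.
have cw'E : [set c; w'] \in E.
  exact: upath_edges v'paz cw'_edge.
case/and3P: vhv => vh_path _ vh_uniq.
have cw'_path := valency2_path_edges vh_path vh_uniq c_hm (hm2 _ c_hm) cw'E (set21 _ _).
have w'_in := edges_of_cells cw'_path (set22 _ _).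
by move/negP: disj; apply; apply/hasP; exists w'; rewrite ?mem_head.
Qed.

End Tree.

Section Weight.
Variables (T : finType) (E : {set {set T}}) (q : {set T} -> T -> int).
Hypothesis E2 : forall e, e \in E -> #|e| = 2%N.
Hypothesis tree : is_tree E.

Local Notation upath := (upath E).

(* The factor of [xva] contributed by [eps] along [s]; for a path in a tree an edge off
   the path meets it in at most one cell (lemma [path_factor_cell]). *)
Definition path_factor (s : seq T) (eps : {set T}) : int :=
  if eps \in edges_of s then 1 else \prod_(u <- s | u \in eps) q eps u.

Definition path_weight (s : seq T) : int := \prod_(eps in E) path_factor s eps.

Lemma path_factor_cell x s y eps u : upath x s y -> eps \in E -> eps \notin edges_of (x :: s) ->
  u \in x :: s -> u \in eps -> path_factor (x :: s) eps = q eps u.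
Proof.
move=> xsy epsE epsN u_in u_eps; rewrite /path_factor (negbTE epsN) -big_filter.
have only_u w : w \in [seq w <- x :: s | w \in eps] -> w = u.
  by rewrite mem_filter => /andP[w_eps w_in]; apply: (no_chord E2 tree xsy epsE epsN).
have : u \in [seq w <- x :: s | w \in eps] by rewrite mem_filter u_eps.
have : uniq [seq w <- x :: s | w \in eps] by apply: filter_uniq; case/and3P: xsy.
case: [seq w <- x :: s | w \in eps] only_u => [//|w [|w' r]] only_u.
  by rewrite big_seq1 (only_u _ (mem_head _ _)).
have w_u := only_u w (mem_head _ _).
have w'_u : w' = u by apply: only_u; rewrite !inE eqxx orbT.
by rewrite w_u w'_u /= inE eqxx.
Qed.

Lemma xvaE (f : T -> int) v a : xva E f q v a = f a * path_weight (gamma E v a).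
Proof.
rewrite /xva /path_weight big_mkcondr; congr (_ * _); apply: eq_bigr => eps epsE.
have [s -> vsa] := gamma_upath tree v a.
case: (boolP (eps \in edges_of (v :: s))) => [eps_edge|epsN].
  by rewrite /path_factor eps_edge.
case: (boolP (has (fun u => u \in eps) (v :: s))) => [has_eps|hasN]; last first.
  rewrite /path_factor ifN // big1_seq // => u /andP[u_eps u_in].
  by case/hasP: hasN; exists u.
have u_eps := nth_find v has_eps.
by rewrite /= (path_factor_cell vsa epsE epsN _ u_eps) // mem_nth // -has_find.
Qed.

Lemma path_factor_edge s eps : eps \in edges_of s -> path_factor s eps = 1.
Proof. by rewrite /path_factor => ->. Qed.

Lemma path_factor_off s (eps : {set T}) : ~~ has (mem eps) s -> path_factor s eps = 1.
Proof.
move=> sN; rewrite /path_factor; case: ifP => // _; rewrite big1_seq // => u /andP[u_eps u_in].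
by case/hasP: sN; exists u.
Qed.

Lemma path_factor_cat x s y t eps : uniq (x :: s ++ y :: t) -> eps != [set last x s; y] ->
  path_factor (x :: s ++ y :: t) eps = path_factor (x :: s) eps * path_factor (y :: t) eps.
Proof.
move=> xsyt_uniq eps_e.
have /and3P[_ disj _] : [&& uniq (x :: s), ~~ has (mem (x :: s)) (y :: t) & uniq (y :: t)].
  by rewrite -cat_uniq.
have off_r : eps \in edges_of (x :: s) -> path_factor (y :: t) eps = 1.
  move=> eps_l; apply: path_factor_off; apply: contra disj => /hasP[u u_in u_eps].
  by apply/hasP; exists u => //; apply: edges_of_cells eps_l u_eps.
have off_l : eps \in edges_of (y :: t) -> path_factor (x :: s) eps = 1.
  move=> eps_r; apply: path_factor_off; apply: contra disj => /hasP[u u_in u_eps].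
  by apply/hasP; exists u; [apply: edges_of_cells eps_r u_eps | ].
case: (boolP (eps \in edges_of (x :: s))) => [eps_l|epsNl].
  have eps_all : eps \in edges_of (x :: s ++ y :: t) by rewrite edges_of_cat mem_cat eps_l.
  by rewrite (path_factor_edge eps_all) (path_factor_edge eps_l) off_r.
case: (boolP (eps \in edges_of (y :: t))) => [eps_r|epsNr].
  have eps_all : eps \in edges_of (x :: s ++ y :: t).
    by rewrite edges_of_cat mem_cat in_cons eps_r !orbT.
  by rewrite (path_factor_edge eps_all) (path_factor_edge eps_r) off_l.
rewrite /path_factor edges_of_cat mem_cat in_cons (negbTE eps_e) /= !ifN ?negb_or ?epsNl //.
by rewrite -cat_cons big_cat.
Qed.

Lemma path_factor_head x s y t : uniq (x :: s ++ y :: t) ->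
  path_factor (y :: t) [set last x s; y] = q [set last x s; y] y.
Proof.
rewrite -cat_cons cat_uniq => /and3P[_ disj /andP[yNt _]].
have lastN : last x s \notin y :: t.
  by apply: contra disj => last_in; apply/hasP; exists (last x s); rewrite ?mem_last.
rewrite /path_factor ifN; last by apply: contra lastN => /edges_of_cells; apply; rewrite set21.
rewrite big_cons set22 big1_seq ?mulr1 // => u /andP[]; rewrite !inE => /orP[]/eqP-> u_in.
  by rewrite in_cons u_in orbT in lastN.
by rewrite u_in in yNt.
Qed.

Lemma path_factor_linear_head x s y eps : upath x (rcons s y) y ->
  {in s, forall c, valency E c = 2%N} -> eps \in E -> eps != [set last x s; y] ->
  path_factor (x :: s) eps = if (x \in eps) && (eps != [set x; head y s]) then q eps x else 1.
Proof.
case/and3P=> xsy_path _ xsy_uniq s2 epsE eps_e.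
have xs_uniq : uniq (x :: s) by move: xsy_uniq; rewrite -cats1 -cat_cons cat_uniq => /andP[].
have first_edge : s != [::] -> [set x; head y s] \in edges_of (x :: s).
  by case: s {xsy_path xsy_uniq s2 eps_e xs_uniq} => [|z s] //= _; rewrite edges_of_cons2 mem_head.
case: (boolP (eps \in edges_of (x :: s))) => [eps_edge|epsN].
  rewrite path_factor_edge //.
  case: s first_edge xs_uniq eps_edge {xsy_path xsy_uniq s2 eps_e} => [//|z s] _ xs_uniq eps_edge.
  by case: ifP => // /andP[x_eps]; rewrite (edges_of_head xs_uniq eps_edge x_eps) eqxx.
have inner_off : \prod_(u <- s | u \in eps) q eps u = 1.
  rewrite big1_seq // => u /andP[u_eps u_s].
  move: (valency2_path_edges xsy_path xsy_uniq u_s (s2 _ u_s) epsE u_eps).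
  by rewrite edges_of_rcons mem_rcons in_cons (negbTE eps_e) (negbTE epsN).
have eps_first : eps != [set x; head y s].
  case: s first_edge eps_e epsN {xsy_path xsy_uniq s2 xs_uniq inner_off}
    => [_ //|z s first_edge _ epsN].
  by apply: contraNneq epsN => ->; apply: first_edge.
rewrite /path_factor ifN // big_cons inner_off eps_first andbT.
by case: (x \in eps); rewrite ?mulr1.
Qed.

Lemma path_weight_linear_cat x s y t z : upath x (s ++ y :: t) z ->
  {in s, forall c, valency E c = 2%N} ->
  let K := \prod_(eps in E | eps != [set last x s; y]) path_factor (y :: t) eps in
  path_weight (x :: s ++ y :: t) = Qf E q [set x; head y s] x * K /\
  path_weight (y :: t) = q [set last x s; y] y * K.
Proof.
move=> xsz s2 K; have xs_uniq : uniq (x :: s ++ y :: t) by case/and3P: xsz.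
have e_edge : [set last x s; y] \in edges_of (x :: s ++ y :: t).
  by rewrite edges_of_cat mem_cat mem_head orbT.
have eE := upath_edges xsz e_edge.
have [[w [w_eq xwy]] _] := upath_split xsz (erefl : x :: s ++ y :: t = (x :: s) ++ y :: t).
move: w_eq xwy; rewrite rcons_cons => -[->] xsy.
rewrite /path_weight !(bigD1 _ eE) /= path_factor_edge // path_factor_head // mul1r; split => //.
rewrite (eq_bigr (fun eps => path_factor (x :: s) eps * path_factor (y :: t) eps)); last first.
  by move=> eps /andP[_ eps_e]; apply: path_factor_cat.
rewrite big_split /=; congr (_ * _).
have x_e : (x \in [set last x s; y]) && ([set last x s; y] != [set x; head y s]) = false.
  have hs : s ++ y :: t = head y s :: behead (s ++ y :: t) by case: (s).
  move: xs_uniq e_edge; rewrite hs => xs_uniq e_edge.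
  by case: (boolP (x \in _)) => // /(edges_of_head xs_uniq e_edge) ->; rewrite eqxx.
rewrite /Qf [RHS]big_mkcondr [RHS](bigD1 _ eE) /= x_e mul1r.
by apply: eq_bigr => eps /andP[epsE eps_e]; rewrite (path_factor_linear_head xsy).
Qed.

Lemma Qf_valency2 c e1 e2 : valency E c = 2%N -> e1 \in E -> e2 \in E ->
  c \in e1 -> c \in e2 -> e1 != e2 -> Qf E q e1 c = q e2 c.
Proof.
move=> c2 e1E e2E ce1 ce2 e12; rewrite /Qf (big_pred1 e2) // => e /=.
case: (eqVneq e e2) => [->|e_e2]; first by rewrite e2E ce2 eq_sym e12.
apply/negbTE/and3P => -[eE ce e_e1].
case/orP: (valency2_edges c2 e1E e2E eE ce1 ce2 ce e12) => /eqP e_eq.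
  by rewrite e_eq eqxx in e_e1.
by rewrite e_eq eqxx in e_e2.
Qed.

End Weight.

Section Rooted.
Variables (T : finType) (V A : {set T}) (E : {set {set T}}) (f : T -> int)
  (q : {set T} -> T -> int) (v0 : T).
Hypothesis VA_cover : V :|: A = [set: T].
Hypothesis E2 : forall e, e \in E -> #|e| = 2%N.
Hypothesis tree : is_tree E.
Hypothesis arrow1 : forall a, a \in A -> valency E a = 1%N.
Hypothesis root : is_root V E q v0.
Hypothesis neg_dets : negative_dets V E q.
Hypothesis f_ge0 : forall a, a \in A -> 0 <= f a.

Lemma notin_V c : c \notin A -> c \in V.
Proof.
move=> cNA; have : c \in V :|: A by rewrite VA_cover inE.
by rewrite inE (negbTE cNA) orbF.
Qed.

Lemma root_q_ge1 z w pu u t eps : gamma E v0 z = w ++ pu :: u :: t -> u \in V ->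
  eps \in E -> u \in eps -> eps != [set pu; u] -> 1 <= q eps u.
Proof.
move=> g_eq uV epsE u_eps eps_pred.
have [s g_s v0sz] := gamma_upath tree v0 z.
have g_split : v0 :: s = rcons w pu ++ u :: t by rewrite -g_s g_eq cat_rcons.
have [[w' [w'_eq v0w'u]] _] := upath_split v0sz g_split.
have u_v0 : u != v0.
  apply/eqP => u_eq; move: v0w'u (congr1 size w'_eq); rewrite u_eq !size_rcons.
  case: w' {w'_eq} => [//|a r] /and3P[_ /eqP /= last_v0 /andP[v0N _]] _.
  by have := mem_last a r; rewrite last_v0 (negbTE v0N).
have [_ _ /(_ u uV u_v0)[ge1 _]] := root.
apply: ge1 => //; rewrite (gammaE tree v0w'u) w'_eq.
have path_uniq : uniq (rcons (rcons w pu) u) by rewrite -w'_eq; case/and3P: v0w'u.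
by apply: contra eps_pred => /(edges_of_last u path_uniq) /(_ u_eps) ->; rewrite last_rcons.
Qed.

Lemma root_Qf_gt0 z w pu u t : gamma E v0 z = w ++ pu :: u :: t -> u \in V ->
  0 < Qf E q [set pu; u] u.
Proof.
move=> g_eq uV; apply: prodr_gt0 => eps /and3P[epsE u_eps eps_pred].
exact: lt_le_trans ltr01 (root_q_ge1 g_eq uV epsE u_eps eps_pred).
Qed.

Lemma root_q_gt0 z w u u' t : gamma E v0 z = w ++ u :: u' :: t -> u \in V ->
  0 < q [set u; u'] u.
Proof.
move=> g_eq uV; have g_uniq := gamma_uniq tree v0 z.
have e_edge : [set u; u'] \in edges_of (gamma E v0 z).
  by rewrite g_eq edges_of_catr // edges_of_cons2 mem_head.
have eE := gamma_edges tree e_edge.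
case/lastP: w g_eq => [|w pu] g_eq.
  have [s g_s _] := gamma_upath tree v0 z; move: g_s; rewrite g_eq => -[u_v0 _].
  by subst u; have [_ -> //] := root; rewrite set21.
rewrite cat_rcons in g_eq; apply: lt_le_trans ltr01 (root_q_ge1 g_eq uV eE (set21 _ _) _).
move: g_uniq; rewrite g_eq cat_uniq /= !inE !negb_or.
move=> /and3P[_ _ /and3P[/and3P[_ pu_u' _] /andP[u_u' _] _]].
apply/eqP => /setP /(_ u'); rewrite !inE eqxx orbT => /esym /orP[]/eqP u'_eq.
  by rewrite u'_eq eqxx in pu_u'.
by rewrite u'_eq eqxx in u_u'.
Qed.

Lemma path_factor_root_tail_gt0 z w pu u t eps : gamma E v0 z = w ++ pu :: u :: t ->
  eps \in E -> eps != [set pu; u] -> 0 < path_factor q (u :: t) eps.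
Proof.
move=> g_eq epsE eps_first; rewrite /path_factor; case: ifP => // epsN.
rewrite big_seq_cond; apply: prodr_gt0 => c /andP[c_in c_eps].
have [w1 [w2 ut_eq]] := mem_split c_in.
have g_c : gamma E v0 z = (w ++ belast pu w1) ++ last pu w1 :: c :: w2.
  by rewrite g_eq ut_eq -catA -cat_cons lastI cat_rcons.
have pred_edge : [set last pu w1; c] \in edges_of (pu :: u :: t).
  by rewrite ut_eq edges_of_cat mem_cat mem_head orbT.
have predE : [set last pu w1; c] \in E.
  by apply: (gamma_edges tree (x := v0) (y := z)); rewrite g_eq edges_of_catr.
have eps_pred : eps != [set last pu w1; c].
  apply: contraFneq epsN => eps_eq.
  by move: pred_edge; rewrite -eps_eq edges_of_cons2 in_cons (negbTE eps_first).
have cV : c \in V.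
  apply: notin_V; apply: contra eps_pred => cA.
  by rewrite (valency1_edge (arrow1 cA) epsE predE c_eps (set22 _ _)).
exact: lt_le_trans ltr01 (root_q_ge1 g_c cV epsE c_eps eps_pred).
Qed.

Lemma valency2_in_V c : valency E c = 2%N -> c \in V.
Proof. by move=> c2; apply: notin_V; apply/negP => /arrow1; rewrite c2. Qed.

Section Linear.
Variables (v v' : T) (hm r1 : seq T).
Hypotheses (vV : v \in V) (v'V : v' \in V).
Hypothesis g_vv' : gamma E v v' = v :: rcons hm v'.
Hypothesis hm2 : {in hm, forall c, valency E c = 2%N}.
Hypothesis g_root : gamma E v0 v' = r1 ++ v :: rcons hm v'.

Local Notation G := (v :: rcons hm v').
Local Notation x i := (nth v G i).
Local Notation n := (size hm).+1.

Lemma linear_upath : upath E v (rcons hm v') v'.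
Proof. by have [s g_s vsv'] := gamma_upath tree v v'; move: g_s; rewrite g_vv' => -[->]. Qed.

Lemma x_inj i j : (i <= n)%N -> (j <= n)%N -> x i = x j -> i = j.
Proof.
have G_uniq : uniq G by case/and3P: linear_upath.
move=> i_le j_le xij; apply/eqP.
by rewrite -(nth_uniq v _ _ G_uniq) ?xij // /= size_rcons ltnS.
Qed.

Lemma x_split i : (i < n)%N -> gamma E v0 v' = (r1 ++ take i G) ++ x i :: x i.+1 :: drop i.+2 G.
Proof.
move=> i_lt; have size_G : size G = n.+1 by rewrite /= size_rcons.
rewrite g_root -catA; congr (r1 ++ _).
by rewrite -{1}(cat_take_drop i G) (drop_nth v) ?size_G ?ltnS ?(ltnW i_lt) // (drop_nth v) ?size_G.
Qed.

Lemma x_edge i : (i < n)%N -> [set x i; x i.+1] \in E.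
Proof.
move=> i_lt; apply: (gamma_edges tree (x := v0) (y := v')).
by rewrite (x_split i_lt) edges_of_catr // edges_of_cons2 mem_head.
Qed.

Lemma x_V i : (i <= n)%N -> x i \in V.
Proof.
case: i => [//|i] i_le; case: (ltngtP i.+1 n) i_le => // [i_lt _|-> _].
  by apply/valency2_in_V/hm2; rewrite /= nth_rcons (i_lt : (i < size hm)%N) mem_nth.
by rewrite nth_last_cons_rcons.
Qed.

Lemma q_fwd_gt0 i : (i < n)%N -> 0 < q [set x i; x i.+1] (x i).
Proof. by move=> i_lt; apply: root_q_gt0 (x_split i_lt) (x_V (ltnW i_lt)). Qed.

Lemma Qf_bwd_gt0 i : (i < n)%N -> 0 < Qf E q [set x i; x i.+1] (x i.+1).
Proof. by move=> i_lt; apply: root_Qf_gt0 (x_split i_lt) (x_V i_lt). Qed.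

Lemma det_chain k : (k < n)%N ->
  q [set x 0; x 1] (x 0) * q [set x k; x k.+1] (x k.+1) <
  Qf E q [set x 0; x 1] (x 0) * Qf E q [set x k; x k.+1] (x k.+1).
Proof.
elim: k => [|k IH] k_lt.
  by have := neg_dets (x_V (i := 0) isT) (x_V k_lt) (x_edge k_lt); rewrite /detE subr_lt0.
have k_lt' : (k < n)%N by apply: ltnW.
have xk1_2 : valency E (x k.+1) = 2%N.
  by apply: hm2; rewrite /= nth_rcons (k_lt : (k < size hm)%N) mem_nth.
have edges_ne : [set x k; x k.+1] != [set x k.+1; x k.+2].
  apply/eqP => /setP /(_ (x k)); rewrite !inE eqxx => /esym /orP[]/eqP xk_eq.
    by have := x_inj (ltnW k_lt') k_lt' xk_eq; lia.
  by have := x_inj (ltnW k_lt') k_lt xk_eq; lia.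
have Q_prev := Qf_valency2 q xk1_2 (x_edge k_lt') (x_edge k_lt) (set22 _ _) (set21 _ _) edges_ne.
have Q_next : Qf E q [set x k.+1; x k.+2] (x k.+1) = q [set x k; x k.+1] (x k.+1).
  by apply: Qf_valency2 xk1_2 (x_edge k_lt) (x_edge k_lt') (set21 _ _) (set22 _ _) _; rewrite eq_sym.
have := neg_dets (x_V (ltnW k_lt)) (x_V k_lt) (x_edge k_lt); rewrite /detE Q_next subr_lt0.
move=> det_next; apply: cross_lt_trans (q_fwd_gt0 (i := 0) isT) (q_fwd_gt0 k_lt) (Qf_bwd_gt0 k_lt) _
  det_next.
by rewrite -Q_prev; apply: IH.
Qed.

Local Notation q_first := (q [set v; head v' hm] v).
Local Notation Q_first := (Qf E q [set v; head v' hm] v).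
Local Notation q_last := (q [set last v hm; v'] v').
Local Notation Q_last := (Qf E q [set last v hm; v'] v').
Local Notation cross a := (q_first * xva E f q v' a - Q_last * xva E f q v a).

Lemma q_first_gt0 : 0 < q_first.
Proof. by have := q_fwd_gt0 (i := 0) isT; rewrite nth1_cons_rcons. Qed.

Lemma Q_last_gt0 : 0 < Q_last.
Proof.
by have := Qf_bwd_gt0 (ltnSn (size hm)); rewrite nth_size_cons_rcons nth_last_cons_rcons.
Qed.

Lemma det_chain_ends : q_first * q_last < Q_first * Q_last.
Proof.
have := det_chain (ltnSn (size hm)).
by rewrite nth1_cons_rcons nth_size_cons_rcons nth_last_cons_rcons.
Qed.

Lemma cross_beyond a pa : gamma E v' a = v' :: pa -> gamma E v a = v :: hm ++ v' :: pa ->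
  0 < f a -> cross a < 0.
Proof.
move=> g_v'a g_va fa_gt0.
have [s g_s vsa] := gamma_upath tree v a; move: g_s; rewrite g_va => -[s_eq]; subst s.
have lastN : last v0 (r1 ++ v :: hm) \notin pa.
  have := gamma_uniq tree v a; rewrite g_va -cat_cons cat_uniq => /and3P[_ + _].
  apply: contra; rewrite last_cat => last_in.
  by apply/hasP; exists (last v hm); rewrite ?mem_last // in_cons last_in orbT.
have g_v0a : gamma E v0 a = (r1 ++ belast v hm) ++ last v hm :: v' :: pa.
  rewrite (gamma_cat tree (p := r1 ++ v :: hm) _ g_v'a lastN); last by rewrite g_root rcons_cat.
  by rewrite cat_rcons lastI -!catA cat_rcons.
have K_gt0 : 0 < \prod_(eps in E | eps != [set last v hm; v']) path_factor q (v' :: pa) eps.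
  by apply: prodr_gt0 => eps /andP[epsE eps_e]; apply: path_factor_root_tail_gt0 g_v0a epsE eps_e.
have [W_v W_v'] := path_weight_linear_cat q vsa hm2.
rewrite !(xvaE q E2 tree) g_v'a g_va W_v W_v'; move: K_gt0; set K := \prod_(_ in _ | _) _ => K_gt0.
have -> : q_first * (f a * (q_last * K)) - Q_last * (f a * (Q_first * K)) =
          (f a * K) * (q_first * q_last - Q_first * Q_last) by ring.
by rewrite pmulr_rlt0 ?mulr_gt0 // subr_lt0 det_chain_ends.
Qed.

Lemma cross_behind a t : gamma E v' a = v' :: rev hm ++ v :: t -> gamma E v a = v :: t ->
  cross a = 0.
Proof.
move=> g_v'a g_va.
have [s g_s v'sa] := gamma_upath tree v' a; move: g_s; rewrite g_v'a => -[s_eq]; subst s.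
have hm2_rev : {in rev hm, forall c, valency E c = 2%N} by move=> c; rewrite mem_rev; apply: hm2.
have [W_v' W_v] := path_weight_linear_cat q v'sa hm2_rev.
rewrite !(xvaE q E2 tree) g_v'a g_va W_v' W_v head_rev last_rev.
rewrite [[set v'; _]]setUC [[set head v' hm; v]]setUC.
by ring.
Qed.

Lemma cross_behind_not_lt a t : gamma E v' a = v' :: rev hm ++ v :: t -> ~~ tree_lt E v0 v' a.
Proof.
move=> g_v'a; apply/negP => /andP[_ v'_in].
have [w1 [w2 g_eq]] := mem_split v'_in.
have [s g_s v0sa] := gamma_upath tree v0 a.
have [[w [w_eq v0wv']] v'w2a] := upath_split v0sa (etrans (esym g_s) g_eq).
have vv' : v != v'.
  by case/and3P: linear_upath => _ _ /andP[+ _]; apply: contra => /eqP->; rewrite mem_rcons mem_head.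
have v_w1 : v \in w1.
  have : v \in rcons w1 v' by rewrite -w_eq -(gammaE tree v0wv') g_root mem_cat mem_head orbT.
  by rewrite mem_rcons in_cons (negbTE vv').
have v_w2 : v \in w2.
  by move: (gammaE tree v'w2a); rewrite g_v'a => -[<-]; rewrite mem_cat mem_head orbT.
have := gamma_uniq tree v0 a; rewrite g_eq cat_uniq => /and3P[_ /negP disj _].
by apply: disj; apply/hasP; exists v; rewrite // in_cons v_w2 orbT.
Qed.

Lemma cross_sign a : a \in A -> f a != 0 -> cross a <= 0 /\ (tree_lt E v0 v' a -> cross a < 0).
Proof.
move=> aA fa_ne0; have fa_gt0 : 0 < f a by rewrite lt_def fa_ne0 f_ge0.
have aNhm : a \notin hm by apply/negP => /hm2; rewrite (arrow1 aA).
case: (gamma_linear_cases tree linear_upath hm2 aNhm) => [[pa g_v'a g_va]|[t g_v'a g_va]].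
  by have cross_lt0 := cross_beyond g_v'a g_va fa_gt0; split => //; apply: ltW.
by rewrite (cross_behind g_v'a g_va) (negbTE (cross_behind_not_lt g_v'a)).
Qed.

Lemma Nv_cross : q_first * Nv A E f q v' - Q_last * Nv A E f q v = \sum_(a in A | f a != 0) cross a.
Proof. by rewrite /Nv !mulr_sumr -sumrB. Qed.

Lemma linear_Nv_le0 : q_first * Nv A E f q v' - Q_last * Nv A E f q v <= 0.
Proof. by rewrite Nv_cross; apply: sumr_le0 => a /andP[aA fa]; case: (cross_sign aA fa). Qed.

Lemma linear_Nv_lt0 : (exists a, [/\ a \in A, f a != 0 & tree_lt E v0 v' a]) ->
  q_first * Nv A E f q v' - Q_last * Nv A E f q v < 0.
Proof.
case=> a [aA fa lt_a]; rewrite Nv_cross (bigD1 a) /=; last by rewrite aA fa.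
rewrite -[0]addr0; apply: ltr_leD; first exact: (cross_sign aA fa).2 lt_a.
by apply: sumr_le0 => b /andP[/andP[bA fb] _]; case: (cross_sign bA fb).
Qed.

End Linear.

End Rooted.

Theorem proposition5p8 (T : finType) (V A : {set T}) (E : {set {set T}})
  (f : T -> int) (q : {set T} -> T -> int) (v0 : T) :
  decorated_tree V A E f q -> is_root V E q v0 -> negative_dets V E q ->
  (forall a, a \in A -> 0 <= f a) ->
  forall v v' : T, v \in V -> v' \in V -> tree_lt E v0 v v' ->
  linear_path E (gamma E v v') ->
  let g := gamma E v v' in
  let n := (size g).-1 in
  let qq := q [set nth v g 0; nth v g 1] v in
  let Q' := Qf E q [set nth v g n.-1; nth v g n] v' in
  (0 < qq /\ 0 < Q' /\ qq * Nv A E f q v' - Q' * Nv A E f q v <= 0) /\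
  ((exists a, [/\ a \in A, f a != 0 & tree_lt E v0 v' a]) ->
     qq * Nv A E f q v' - Q' * Nv A E f q v < 0).
Proof.
move=> [_ [VA_cov [E2 [tree [arrow1 _]]]]] root neg_dets f_ge0 v v' vV v'V v_lt linear.
have [hm [r1 [g_vv' hm2 g_root]]] := gamma_linear tree v_lt linear.
rewrite g_vv' in g_root *; cbv zeta.
rewrite [size _]/= size_rcons [nth v _ 0]/= nth1_cons_rcons nth_size_cons_rcons nth_last_cons_rcons.
have q_gt0 := q_first_gt0 VA_cov tree arrow1 root vV v'V hm2 g_root.
have Q_gt0 := Q_last_gt0 VA_cov tree arrow1 root vV v'V hm2 g_root.
have Nv_le0 := linear_Nv_le0 VA_cov E2 tree arrow1 root neg_dets f_ge0 vV v'V g_vv' hm2 g_root.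
have Nv_lt0 := linear_Nv_lt0 VA_cov E2 tree arrow1 root neg_dets f_ge0 vV v'V g_vv' hm2 g_root.
by [].
Qed.
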